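(* Let $G$ be a simple graph of order $n$ and $m\ge 3$. Let $\alpha'(G)$ be the size of a maximum matching $M$ of $G$ and $l=n-2\alpha'(G)$ the number of $M$-unsaturated vertices of $G$. Then $s(G\circ C_m)=n\,s(C_m)+\alpha'(G)+l$ if $m\equiv 0\pmod 3$, and $s(G\circ C_m)=n\,s(C_m)$ otherwise.
   Context: A matching in a graph is a set of edges no two of which share a vertex; it is maximal if it is not properly contained in another matching, and maximum if it has the largest possible size. A vertex is $M$-unsaturated if no edge of $M$ is incident to it. The saturation number $s(G)$ is the minimum cardinality of a maximal matching of $G$. $C_m$ is the cycle on $m$ vertices; $s(C_m)=\lceil m/3\rceil$. The corona $G_1\circ G_2$ is obtained by taking one copy of $G_1$ and $|V(G_1)|$ disjoint copies of $G_2$, and joining the $i$-th vertex of $G_1$ by an edge to every vertex of the $i$-th copy of $G_2$. *)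

From mathcomp Require Import all_boot.
Set Implicit Arguments. Unset Strict Implicit. Unset Printing Implicit Defensive.

(* A simple graph is a symmetric irreflexive relation e on a finType T.
   An edge {x,y} is represented by the 2-element set [set x; y]. *)

Definition is_matching (T : finType) (e : rel T) (M : {set {set T}}) : bool :=
  [forall A in M, exists x, exists y, e x y && (A == [set x; y])] &&
  [forall A in M, forall B in M, (A != B) ==> [disjoint A & B]].

Definition is_maximal_matching (T : finType) (e : rel T) (M : {set {set T}}) : bool :=
  is_matching e M &&
  [forall N : {set {set T}}, ~~ (is_matching e N && (M \proper N))].

Definition matching_number (T : finType) (e : rel T) : nat :=
  \max_(M : {set {set T}} | is_matching e M) #|M|.

(* s(G): minimum cardinality of a maximal matching (default #|T| is never
   attained spuriously: maximal matchings exist and have size <= #|T|). *)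
Definition saturation_number (T : finType) (e : rel T) : nat :=
  \big[minn/#|T|]_(M : {set {set T}} | is_maximal_matching e M) #|M|.

(* The cycle C_m on vertex set 'I_m (a simple cycle for m >= 3). *)
Definition cycle_rel (m : nat) : rel 'I_m :=
  fun i j => (nat_of_ord j == i.+1 %% m) || (nat_of_ord i == j.+1 %% m).

(* Corona G o C_m: vertices inl v (copy of G) and inr (v, i) (i-th vertex of
   the copy of C_m attached to v). *)
Definition corona_rel (T : finType) (e : rel T) (m : nat) : rel (T + (T * 'I_m)) :=
  fun a b =>
    match a, b with
    | inl x, inl y => e x y
    | inl x, inr (y, _) => x == y
    | inr (y, _), inl x => x == y
    | inr (x, i), inr (y, j) => (x == y) && cycle_rel i j
    end.
Arguments corona_rel [T] e m : rename.
Arguments cycle_rel : clear implicits.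

From mathcomp Require Import all_boot zify.
Set Implicit Arguments. Unset Strict Implicit. Unset Printing Implicit Defensive.

(* Cycle edge [{i, i+1}] of [C_m] is saturated only if [i] or [i+1] is matched,
   and a matching edge inside the cycle serves at most three cycle edges; hence
   [s(C_m) = ceil(m/3)], attained by the pairs [{3j, 3j+1}] (plus one edge when
   [3] does not divide [m]).
   In a maximal matching of [G o C_m] every edge either lies in [G] or meets one
   copy of [C_m]. The edges meeting the copy at [v] must saturate all [m] cycle
   edges, so there are at least [ceil(m/3)] of them. When [3] divides [m] and no
   edge of [G] saturates [v] there is one more: either the spoke [v]-copy is used,
   and it serves only two cycle edges, or [v] is unsaturated and all [m] copy
   vertices must be matched. The [G]-edges form a matching of [G], of size at most
   [alpha'(G)], and saturate at most twice as many vertices, which yields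
   [n ceil(m/3) + alpha'(G) + l] when [3] divides [m]. Conversely, pairs [{3j, 3j+1}]
   in every copy together with a maximum matching of [G] and a spoke at each
   unsaturated vertex (when [3] divides [m]), resp. a spoke to vertex [3 floor(m/3)]
   at every vertex (otherwise), form a maximal matching of that size. *)

Lemma card_bigcup_le (T I : finType) (P : pred I) (F : I -> {set T}) :
  #|\bigcup_(i | P i) F i| <= \sum_(i | P i) #|F i|.
Proof.
apply: (big_ind2 (fun (X : {set T}) n => #|X| <= n)) => [|X1 n1 X2 n2 h1 h2|//].
  by rewrite cards0.
exact: leq_trans (leq_card_setU X1 X2).1 (leq_add h1 h2).
Qed.

Lemma card_fibers (U J : finType) (f : U -> J) (A : {set U}) :
  #|A| = \sum_(j : J) #|[set x in A | f x == j]|.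
Proof.
rewrite -sum1_card (partition_big f predT) //=; apply: eq_bigr => j _.
by rewrite -sum1_card; apply: eq_bigl => x; rewrite inE.
Qed.

Lemma sum_option (T : finType) (F : option T -> nat) :
  \sum_(o : option T) F o = F None + \sum_(v : T) F (Some v).
Proof.
rewrite (bigD1 None) //= (@reindex_omap _ _ _ _ _ Some id) => [|[]//].
by under eq_bigl do rewrite eqxx.
Qed.

Lemma sum_mem_card (T : finType) (A : {set T}) : \sum_(x : T) (x \in A : nat) = #|A|.
Proof. by rewrite -sum1_card [RHS]big_mkcond; apply: eq_bigr => x _; case: (x \in A). Qed.

Lemma card_preimset_le (aT rT : finType) (f : aT -> rT) (A : {set rT}) :
  injective f -> #|f @^-1: A| <= #|A|.
Proof.
move=> f_inj; rewrite -(card_imset _ f_inj); apply/subset_leq_card/subsetP.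
by move=> y /imsetP [x]; rewrite inE => Ax ->.
Qed.

Lemma bigminn_le_cond (I : finType) (P : pred I) (f : I -> nat) d i0 :
  P i0 -> \big[minn/d]_(i | P i) f i <= f i0.
Proof.
rewrite /index_enum; have : i0 \in Finite.enum I by rewrite -enumT mem_enum.
elim: (Finite.enum I) => //= a s IH; rewrite inE big_cons => /orP [/eqP <- ->|].
  exact: geq_minl.
by move=> /IH h /h {}h; case: (P a) => //; exact: leq_trans (geq_minr _ _) h.
Qed.

Lemma bigminn_ge (I : finType) (P : pred I) (f : I -> nat) d b :
  (forall i, P i -> b <= f i) -> b <= d -> b <= \big[minn/d]_(i | P i) f i.
Proof.
by move=> H hd; elim/big_ind: _ => // x y hx hy; rewrite leq_min hx hy.
Qed.

Section Matchings.
Variables (U : finType) (r : rel U).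
Implicit Types (M : {set {set U}}) (A B : {set U}) (x y : U).

Definition saturated M x := [exists A in M, x \in A].

Lemma matching_intro M :
  (forall A, A \in M -> exists x y, r x y /\ A = [set x; y]) ->
  (forall A B x, A \in M -> B \in M -> x \in A -> x \in B -> A = B) ->
  is_matching r M.
Proof.
move=> edgeM eqM; apply/andP; split.
  apply/forall_inP => A /edgeM [x [y [rxy ->]]].
  by apply/existsP; exists x; apply/existsP; exists y; rewrite rxy eqxx.
apply/forall_inP => A AM; apply/forall_inP => B BM; apply/implyP => neqAB.
rewrite -setI_eq0; apply/set0Pn => [[x]]; rewrite inE => /andP [xA xB].
by rewrite (eqM A B x) ?eqxx in neqAB.
Qed.

Section Matching.
Variable M : {set {set U}}.
Hypothesis mM : is_matching r M.

Lemma matching_edge A : A \in M -> exists x y, r x y /\ A = [set x; y].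
Proof.
case/andP: mM => /forall_inP edgeM _ /edgeM /existsP [x /existsP [y]].
by case/andP=> rxy /eqP ->; exists x, y.
Qed.

Lemma matching_eq A B x : A \in M -> B \in M -> x \in A -> x \in B -> A = B.
Proof.
case/andP: mM => _ /forall_inP disjM AM BM xA xB.
have /forall_inP /(_ B BM) /implyP := disjM A AM.
case: eqVneq => // _ /(_ isT) /disjoint_setI0 /setP /(_ x).
by rewrite !inE xA xB.
Qed.

Lemma card_matching_edge A : A \in M -> #|A| <= 2.
Proof. by case/matching_edge=> x [y [_ ->]]; rewrite cards2; case: (x != y). Qed.

Lemma matching_trivIset : trivIset M.
Proof.
apply/trivIsetP => A B AM BM neqAB; rewrite -setI_eq0; apply/set0Pn => [[x]].
by rewrite inE => /andP [xA xB]; rewrite (matching_eq AM BM xA xB) eqxx in neqAB.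
Qed.

Lemma card_matching_le : #|M| <= #|U|.
Proof.
rewrite -sum1_card; apply: leq_trans (max_card (cover M)).
rewrite -(eqP matching_trivIset); apply: leq_sum => A /matching_edge [x [y [_ ->]]].
by apply/card_gt0P; exists x; rewrite !inE eqxx.
Qed.

Lemma card_cover_matching : irreflexive r -> #|cover M| = 2 * #|M|.
Proof.
move=> r_irr; rewrite -(eqP matching_trivIset) mulnC -sum_nat_const.
apply: eq_bigr => A /matching_edge [x [y [rxy ->]]].
by rewrite cards2; case: eqVneq rxy => // ->; rewrite r_irr.
Qed.

End Matching.

Lemma matching_setU1 M x y : is_matching r M -> r x y ->
  ~~ saturated M x -> ~~ saturated M y -> is_matching r ([set x; y] |: M).
Proof.
move=> mM rxy nx ny.
have unsat A z : A \in M -> z \in A -> z \in [set x; y] -> False.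
  by move=> AM zA; rewrite !inE => /orP [] /eqP ez; subst z;
    [case/negP: nx | case/negP: ny]; apply/existsP; exists A; rewrite AM zA.
apply: matching_intro => [A|A B z].
  by rewrite !inE => /orP [/eqP ->|/(matching_edge mM)]; first by exists x, y.
rewrite !inE => /orP [/eqP ->|AM] /orP [/eqP ->|BM] zA zB //.
- by case: (unsat B z BM zB zA).
- by case: (unsat A z AM zA zB).
- exact: (matching_eq mM AM BM zA zB).
Qed.

Lemma maximal_matchingP M :
  is_maximal_matching r M <->
  is_matching r M /\ forall x y, r x y -> saturated M x || saturated M y.
Proof.
split=> [/andP [mM /forallP maxM] | [mM satM]].
  split=> // x y rxy; apply/negPn/negP; rewrite negb_or => /andP [nx ny].
  case/negP: (maxM ([set x; y] |: M)); rewrite matching_setU1 //=.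
  apply/properP; split; first exact: subsetUr.
  exists [set x; y]; first by rewrite !inE eqxx.
  by apply: contra nx => xyM; apply/existsP; exists [set x; y]; rewrite xyM !inE eqxx.
apply/andP; split=> //; apply/forallP => N; apply/negP => /andP [mN /properP [MN [A AN AM]]].
have [x [y [rxy eA]]] := matching_edge mN AN.
have [z zA satz] : exists2 z, z \in A & saturated M z.
  by case/orP: (satM x y rxy) => ?; [exists x | exists y]; rewrite // eA !inE eqxx ?orbT.
case/existsP: satz => B /andP [BM zB].
by rewrite (matching_eq mN AN (subsetP MN B BM) zA zB) BM in AM.
Qed.

Lemma matching_number_ge M : is_matching r M -> #|M| <= matching_number r.
Proof. exact: (@leq_bigmax_cond _ (is_matching r) (fun N => #|N|)). Qed.

Lemma matching0 : is_matching r set0.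
Proof. by apply: matching_intro => // A; rewrite inE. Qed.

Lemma maximum_matching_exists : exists2 M, is_matching r M & #|M| = matching_number r.
Proof.
have [M mM eqM] := @eq_bigmax_cond _ (is_matching r) (fun N => #|N|)
  (introT card_gt0P (ex_intro _ set0 matching0)).
by exists M.
Qed.

Lemma matching_number_le : irreflexive r -> 2 * matching_number r <= #|U|.
Proof.
move=> r_irr; have [M mM <-] := maximum_matching_exists.
by rewrite -card_cover_matching ?max_card.
Qed.

Lemma saturation_number_eq M k :
  is_maximal_matching r M -> #|M| <= k ->
  (forall N, is_maximal_matching r N -> k <= #|N|) -> saturation_number r = k.
Proof.
move=> maxM leMk lbk; have [mM _] := (maximal_matchingP M).1 maxM.
apply/eqP; rewrite eqn_leq; apply/andP; split.
  by apply: leq_trans leMk; apply: bigminn_le_cond.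
apply: bigminn_ge => //; exact: leq_trans (lbk M maxM) (card_matching_le mM).
Qed.

End Matchings.

Section Cycle.
Variable p : nat.
Local Notation m := p.+1.
Local Notation cr := (cycle_rel p.+1).
Local Notation q := (m %/ 3).

Lemma cycle_rel_ordS (i : 'I_m) : cr i (ordS i).
Proof. by rewrite /cycle_rel /= eqxx. Qed.

Lemma cycle_rel_ordS_or (i j : 'I_m) : cr i j -> j = ordS i \/ i = ordS j.
Proof. by case/orP => /eqP h; [left|right]; apply: val_inj. Qed.

(* The indices [i] whose cycle edge [{i, i+1}] meets [B]. *)
Definition hit_edges (B : {set 'I_m}) := B :|: @ordS m @^-1: B.

Lemma card_hit_edges B : #|hit_edges B| <= 2 * #|B|.
Proof.
apply: leq_trans (leq_card_setU _ _).1 _.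
by rewrite card_preimset ?addnn ?mul2n //; exact: (@ordS_inj m).
Qed.

Lemma card_hit_edges_edge a b : cr a b -> #|hit_edges [set a; b]| <= 3.
Proof.
move=> rab; have le2 : #|[set a; b]| <= 2 by rewrite cards2; case: (a != b).
have shared : 0 < #|[set a; b] :&: @ordS m @^-1: [set a; b]|.
  by apply/card_gt0P; case: (cycle_rel_ordS_or rab) => ->; [exists a | exists b];
    rewrite !inE !eqxx ?orbT.
rewrite /hit_edges cardsU card_preimset; last exact: (@ordS_inj m).
by move: shared le2; set X := #|_ :&: _|; set Y := #|[set a; b]|; lia.
Qed.

Lemma cycle_hit_bound (I : finType) (P : pred I) (F : I -> {set 'I_m}) (w : I -> nat) :
  (forall i, (i \in \bigcup_(a | P a) F a) || (ordS i \in \bigcup_(a | P a) F a)) ->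
  (forall a, P a -> #|hit_edges (F a)| <= w a) -> m <= \sum_(a | P a) w a.
Proof.
move=> hit lew.
have covT : [set: 'I_m] \subset \bigcup_(a | P a) hit_edges (F a).
  apply/subsetP => i _; apply/bigcupP.
  by case/orP: (hit i) => /bigcupP [a Pa iFa]; exists a; rewrite // !inE iFa ?orbT.
rewrite -[m]card_ord -cardsT; apply: leq_trans (subset_leq_card covT) _.
by apply: leq_trans (card_bigcup_le _ _) _; apply: leq_sum.
Qed.

Lemma cycle_saturation_lb M : is_maximal_matching cr M -> m.+2 %/ 3 <= #|M|.
Proof.
case/maximal_matchingP=> mM satM.
suff : m <= \sum_(A in M) 3 by rewrite sum_nat_const; lia.
apply: (@cycle_hit_bound _ (mem M) id) => [i|A /(matching_edge mM) [a [b [rab ->]]]].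
  by case/orP: (satM _ _ (cycle_rel_ordS i)) => /existsP [A /andP [AM iA]];
    apply/orP; [left|right]; apply/bigcupP; exists A.
exact: card_hit_edges_edge.
Qed.

Definition cycle_pair (t : nat) : {set 'I_m} :=
  [set i : 'I_m | (i == t :> nat) || (i == t.+1 :> nat)].

Lemma cycle_pair_edge t : t.+1 < m -> exists x y, cr x y /\ cycle_pair t = [set x; y].
Proof.
move=> ltm; exists (inord t), (inord t.+1); split.
  by rewrite /cycle_rel !inordK ?(modn_small ltm) ?eqxx //; lia.
by apply/setP => i; rewrite !inE -!(inj_eq val_inj) /= !inordK //; apply: ltnW.
Qed.

Lemma cycle_pairs_meet t t' i :
  i \in cycle_pair t -> i \in cycle_pair t' -> t <= t'.+1 /\ t' <= t.+1.
Proof. by rewrite !inE; lia. Qed.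

Lemma cycle_pair_bound (j : 'I_q) : (3 * j).+1 < m.
Proof. by have := ltn_ord j; lia. Qed.

(* A vertex cover of [C_m] saturated by the pairs [{3j, 3j+1}] together with
   any matching edge at [3q] when [3] does not divide [m]. *)
Definition cycle_cover (i : 'I_m) : bool :=
  (i < 3 * q) && (i %% 3 != 2) || (m %% 3 != 0) && (i == 3 * q :> nat).

Lemma cycle_cover_pair (i : 'I_m) :
  i < 3 * q -> i %% 3 != 2 -> exists j : 'I_q, i \in cycle_pair (3 * j).
Proof.
move=> ltq ne2; have ltj : i %/ 3 < q by lia.
by exists (Ordinal ltj); rewrite inE /=; lia.
Qed.

Section CycleMatching.
Hypothesis p2 : 2 <= p.

Lemma cycle_cover_edge i j : cr i j -> cycle_cover i || cycle_cover j.
Proof.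
suff succ (k l : 'I_m) : val l = k.+1 %% m -> cycle_cover k || cycle_cover l.
  by case/orP=> /eqP /succ //; rewrite orbC.
have := ltn_ord k; have := ltn_ord l; rewrite /cycle_cover /= => ltl ltk.
case: (ltnP k.+1 m) => [lt|ge]; first by rewrite (modn_small lt); lia.
by rewrite (_ : k.+1 = m) ?modnn; lia.
Qed.

Definition cycle_matching : {set {set 'I_m}} :=
  [set cycle_pair (3 * j) | j : 'I_q] :|:
  (if m %% 3 == 0 then set0 else [set cycle_pair (3 * q).-1]).

Lemma mem_cycle_matching A : A \in cycle_matching -> exists2 t, A = cycle_pair t &
  (t %% 3 == 0) && (t < 3 * q) || (m %% 3 != 0) && (t == (3 * q).-1).
Proof.
rewrite !inE => /orP [/imsetP [j _ ->]|].
  by exists (3 * j) => //; have := ltn_ord j; lia.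
by case: ifP; rewrite ?inE // => m3 /eqP ->; exists (3 * q).-1; rewrite ?m3 ?eqxx ?orbT.
Qed.

Lemma cycle_matching_saturates i : cycle_cover i -> saturated cycle_matching i.
Proof.
case/orP=> [/andP [ltq ne2] | /andP [m3 /eqP iq]]; apply/existsP.
  have [j ij] := cycle_cover_pair ltq ne2.
  by exists (cycle_pair (3 * j)); rewrite ij andbT !inE; apply/orP; left; apply: imset_f.
exists (cycle_pair (3 * q).-1); rewrite inE (negbTE m3) in_set1 eqxx orbT /=.
by rewrite inE /=; lia.
Qed.

Lemma cycle_matching_maximal : is_maximal_matching cr cycle_matching.
Proof.
apply/maximal_matchingP; split; last first.
  by move=> i j /cycle_cover_edge /orP [] /cycle_matching_saturates ->; rewrite ?orbT.
apply: matching_intro => [A /mem_cycle_matching [t -> ht] | A B i].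
  have lt : t.+1 < m by lia.
  exact: cycle_pair_edge.
move=> /mem_cycle_matching [t -> ht] /mem_cycle_matching [t' -> ht'] it it'.
have [le le'] := cycle_pairs_meet it it'.
by congr cycle_pair; lia.
Qed.

Lemma card_cycle_matching : #|cycle_matching| <= m.+2 %/ 3.
Proof.
apply: leq_trans (leq_card_setU _ _).1 _.
have := leq_imset_card (fun j : 'I_q => cycle_pair (3 * j)) 'I_q; rewrite card_ord.
by case: ifP; rewrite ?cards0 ?cards1; set X := #|_|; lia.
Qed.

Lemma cycle_saturation_number : saturation_number cr = m.+2 %/ 3.
Proof.
exact: saturation_number_eq cycle_matching_maximal card_cycle_matching cycle_saturation_lb.
Qed.

End CycleMatching.
End Cycle.

Section Corona.
Variables (T : finType) (e : rel T) (p : nat).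
Local Notation m := p.+1.
Local Notation q := (m %/ 3).
Local Notation V := (T + T * 'I_m)%type.
Local Notation R := (corona_rel e m).
Local Notation cr := (cycle_rel m).
Implicit Types (A : {set V}) (M : {set {set V}}) (v : T).

Lemma corona_edge_shape M A : is_matching R M -> A \in M ->
  [\/ exists a b, A = [set inl a; inl b] /\ e a b,
      exists v i, A = [set inl v; inr (v, i)]
    | exists v i j, A = [set inr (v, i); inr (v, j)] /\ cr i j].
Proof.
move=> mM /(matching_edge mM) [[a|[v i]] [[b|[w j]] [/= rxy ->]]].
- by constructor 1; exists a, b.
- by move/eqP: rxy => <-; constructor 2; exists a, j.
- by move/eqP: rxy => ->; constructor 2; exists v, i; rewrite setUC.
- by case/andP: rxy => /eqP <- cij; constructor 3; exists v, i, j.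
Qed.

Definition copy_of A : option T := omap fst [pick z : T * 'I_m | inr z \in A].

Lemma copy_of_base a b : copy_of [set inl a; inl b] = None.
Proof. by rewrite /copy_of; case: pickP => // z; rewrite !inE. Qed.

Lemma copy_of_spoke v i : copy_of [set inl v; inr (v, i)] = Some v.
Proof.
rewrite /copy_of; case: pickP => [z|/(_ (v, i))]; rewrite !inE ?eqxx ?orbT //=.
by case/eqP=> ->.
Qed.

Lemma copy_of_copy v i j : copy_of [set inr (v, i); inr (v, j)] = Some v.
Proof.
rewrite /copy_of; case: pickP => [z|/(_ (v, i))]; rewrite !inE ?eqxx //=.
by case/orP=> /eqP [->].
Qed.

Definition copy_trace v A : {set 'I_m} := (fun i => inr (v, i) : V) @^-1: A.

Lemma card_copy_trace v A : #|copy_trace v A| <= #|A|.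
Proof. by apply: card_preimset_le => i j []. Qed.

Section LowerBound.
Variable M : {set {set V}}.
Hypothesis maxM : is_maximal_matching R M.
Let mM : is_matching R M. Proof. by case/maximal_matchingP: maxM. Qed.
Let satM x y : R x y -> saturated M x || saturated M y.
Proof. by case/maximal_matchingP: maxM => _; apply. Qed.

Definition base_edges := [set A in M | copy_of A == None].
Definition copy_edges v := [set A in M | copy_of A == Some v].
Definition base_cover : {set T} := inl @^-1: cover base_edges.

Lemma card_corona_matching : #|M| = #|base_edges| + \sum_v #|copy_edges v|.
Proof. by rewrite (card_fibers copy_of) sum_option. Qed.

Lemma mem_copy_edges A v i : A \in M -> inr (v, i) \in A -> A \in copy_edges v.
Proof.
move=> AM; rewrite inE AM /=.
case: (corona_edge_shape mM AM) => [[a [b [-> _]]]|[w [j ->]]|[w [j [k [-> _]]]]];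
  rewrite !inE //=.
  by case/eqP=> -> _; rewrite copy_of_spoke.
by rewrite copy_of_copy; case/orP=> /eqP [-> _].
Qed.

Lemma mem_base_edges A v : A \in M -> inl v \in A -> A \notin copy_edges v ->
  A \in base_edges.
Proof.
move=> AM; rewrite !inE AM /=.
case: (corona_edge_shape mM AM) => [[a [b [-> _]]]|[w [j ->]]|[w [j [k [-> _]]]]];
  rewrite !inE //= ?copy_of_base ?copy_of_spoke //.
by case/orP=> /eqP // [->]; rewrite eqxx.
Qed.

Lemma copy_edges_hit v i :
  (i \in \bigcup_(A in copy_edges v) copy_trace v A) ||
  (ordS i \in \bigcup_(A in copy_edges v) copy_trace v A).
Proof.
have /satM : R (inr (v, i)) (inr (v, ordS i)) by rewrite /= eqxx cycle_rel_ordS.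
by case/orP=> /existsP [A /andP [AM iA]]; apply/orP; [left|right];
  apply/bigcupP; exists A; first [exact (mem_copy_edges AM iA) | by rewrite inE].
Qed.

Lemma card_hit_copy_trace v A : A \in copy_edges v ->
  #|hit_edges (copy_trace v A)| + (inl v \in A) <= 3.
Proof.
rewrite inE => /andP [AM /eqP copyA].
case: (corona_edge_shape mM AM) => [[a [b [eA _]]]|[w [i eA]]|[w [i [j [eA cij]]]]];
  subst A.
- by rewrite copy_of_base in copyA.
- rewrite copy_of_spoke in copyA; case: copyA => <-.
  have -> : copy_trace w [set inl w; inr (w, i)] = [set i].
    by apply/setP => k; rewrite !inE /= (inj_eq inr_inj) xpair_eqE eqxx.
  by have := card_hit_edges [set i]; rewrite cards1 !inE eqxx; lia.
- rewrite copy_of_copy in copyA; case: copyA => <-.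
  have -> : copy_trace w [set inr (w, i); inr (w, j)] = [set i; j].
    by apply/setP => k; rewrite !inE !(inj_eq inr_inj) !xpair_eqE eqxx.
  by rewrite !inE /= addn0; exact: card_hit_edges_edge.
Qed.

Lemma card_copy_edges_spoke v :
  m + [exists A in copy_edges v, inl v \in A] <= 3 * #|copy_edges v|.
Proof.
have hit : m <= \sum_(A in copy_edges v) (3 - (inl v \in A)).
  apply: cycle_hit_bound (copy_edges_hit v) _ => A /card_hit_copy_trace.
  by case: (inl v \in A) => /=; lia.
have spoke : [exists A in copy_edges v, inl v \in A] <= \sum_(A in copy_edges v) (inl v \in A).
  by case: existsP => // [[A /andP [AW vA]]]; rewrite (bigD1 A) //= vA.
have total : \sum_(A in copy_edges v) ((3 - (inl v \in A)) + (inl v \in A)) =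
    3 * #|copy_edges v|.
  by rewrite mulnC -sum_nat_const; apply: eq_bigr => A _; case: (inl v \in A).
by rewrite -total big_split leq_add.
Qed.

Lemma card_copy_edges_unsaturated v :
  ~~ saturated M (inl v) -> m <= 2 * #|copy_edges v|.
Proof.
move=> unsat.
have covT : [set: 'I_m] \subset \bigcup_(A in copy_edges v) copy_trace v A.
  apply/subsetP => i _; have /satM : R (inl v) (inr (v, i)) by rewrite /= eqxx.
  rewrite (negbTE unsat) => /existsP [A /andP [AM iA]]; apply/bigcupP.
  by exists A; first [exact (mem_copy_edges AM iA) | by rewrite inE].
rewrite mulnC -sum_nat_const -[m in m <= _]card_ord -cardsT.
apply: leq_trans (subset_leq_card covT) (leq_trans (card_bigcup_le _ _) _).
apply: leq_sum => A; rewrite inE => /andP [AM _].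
exact: leq_trans (card_copy_trace v A) (card_matching_edge mM AM).
Qed.

Lemma card_copy_edges v :
  m.+2 %/ 3 + ((m %% 3 == 0) && (v \notin base_cover)) <= #|copy_edges v|.
Proof.
have := card_copy_edges_spoke v.
case: existsP => [_ | nospoke].
  by case: (v \notin base_cover); rewrite ?andbT ?andbF /=; lia.
case: (boolP (saturated M (inl v))) => [/existsP [A /andP [AM vA]] | unsat].
  have AW : A \notin copy_edges v.
    by apply/negP => AW; apply: nospoke; exists A; rewrite AW.
  have -> : v \in base_cover.
    by rewrite inE; apply/bigcupP; exists A => //; exact: mem_base_edges AM vA AW.
  by rewrite andbF; lia.
have := card_copy_edges_unsaturated unsat.
by case: (v \notin base_cover); rewrite ?andbT ?andbF /=; lia.
Qed.

Lemma card_base_cover : #|base_cover| <= 2 * #|base_edges|.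
Proof.
apply: leq_trans (card_preimset_le _ (@inl_inj _ _)) _.
apply: leq_trans (card_bigcup_le _ _) _; rewrite mulnC -sum_nat_const.
by apply: leq_sum => A; rewrite inE => /andP [AM _]; exact (card_matching_edge mM AM).
Qed.

Lemma card_base_edges : #|base_edges| <= matching_number e.
Proof.
pose proj A : {set T} := inl @^-1: A.
have baseP A : A \in base_edges -> A \in M /\ exists a b, A = [set inl a; inl b] /\ e a b.
  rewrite inE => /andP [AM /eqP copyA]; split=> //.
  case: (corona_edge_shape mM AM) => // [[w [i eA]]|[w [i [j [eA _]]]]];
    by rewrite eA ?copy_of_spoke ?copy_of_copy in copyA.
have proj_edge a b : proj [set inl a; inl b] = [set a; b].
  by apply/setP => x; rewrite !inE !(inj_eq inl_inj).
have proj_inj : {in base_edges &, injective proj}.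
  move=> A B /baseP [AM [a [b [eA _]]]] /baseP [BM _] eqAB.
  have : a \in proj A by rewrite eA proj_edge !inE eqxx.
  rewrite eqAB inE => aB; apply: (matching_eq mM AM BM _ aB).
  by rewrite eA !inE eqxx.
rewrite -(card_in_imset proj_inj); apply: matching_number_ge; apply: matching_intro.
  by move=> _ /imsetP [A /baseP [_ [a [b [-> eab]]]] ->]; exists a, b; rewrite proj_edge.
move=> _ _ x /imsetP [A /baseP [AM _] ->] /imsetP [B /baseP [BM _] ->].
by rewrite !inE => xA xB; rewrite (matching_eq mM AM BM xA xB).
Qed.

Lemma corona_matching_lb :
  #|T| * (m.+2 %/ 3) + (if m %% 3 == 0 then #|T| - matching_number e else 0) <= #|M|.
Proof.
have : \sum_v (m.+2 %/ 3 + ((m %% 3 == 0) && (v \notin base_cover))) <=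
    \sum_v #|copy_edges v| by apply: leq_sum => v _; exact: card_copy_edges.
rewrite big_split /= card_corona_matching.
have -> : \sum_(v : T) m.+2 %/ 3 = #|T| * (m.+2 %/ 3) by rewrite sum_nat_const.
case: eqP => _ /=; last by rewrite big1 // addn0; lia.
under eq_bigr do rewrite -in_setC.
rewrite sum_mem_card; have := cardsC base_cover.
have := card_base_cover; have := card_base_edges.
(* [lia] needs these cardinals generalized: their occurrences are convertible but
   differ syntactically (through different coercions to [Type]). *)
move: (#|T| * _) => c; set S := \sum_v _; clearbody S.
by move: #|base_edges| #|base_cover| #|~: base_cover| #|T| => b B X n; lia.
Qed.

End LowerBound.

Section UpperBound.
Hypothesis p2 : 2 <= p.
Hypothesis e_irr : irreflexive e.
Variable H : {set {set T}}.
Hypothesis mH : is_matching e H.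
Hypothesis H_empty : m %% 3 != 0 -> H = set0.

(* A copy vertex off the pairs [{3j, 3j+1}]; when [3] does not divide [m] it
   must be [3q], the only such vertex in [cycle_cover]. *)
Definition spoke_index : 'I_m := if m %% 3 == 0 then ord_max else inord (3 * q).

Lemma spoke_index_val : spoke_index = (if m %% 3 == 0 then p else 3 * q) :> nat.
Proof. by rewrite /spoke_index; case: ifP => //= m3; rewrite inordK //; lia. Qed.

Definition lift_base (B : {set T}) : {set V} :=
  [set z : V | if z is inl x then x \in B else false].
Definition lift_copy v (B : {set 'I_m}) : {set V} :=
  [set z : V | if z is inr (w, i) then (w == v) && (i \in B) else false].
Definition spoke v : {set V} := lift_base [set v] :|: lift_copy v [set spoke_index].

Definition corona_matching : {set {set V}} :=
  [set lift_base B | B in H] :|: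
  [set lift_copy x.1 (cycle_pair p (3 * x.2)) | x : T * 'I_q] :|:
  [set spoke v | v in ~: cover H].

Lemma mem_corona_matching A : A \in corona_matching ->
  [\/ exists2 B, B \in H & A = lift_base B,
      exists v (j : 'I_q), A = lift_copy v (cycle_pair p (3 * j))
    | exists2 v, v \notin cover H & A = spoke v].
Proof.
rewrite !inE => /orP [/orP [] |].
- by case/imsetP=> B BH ->; constructor 1; exists B.
- by case/imsetP=> [[v j] _ ->]; constructor 2; exists v, j.
- by case/imsetP=> v; rewrite inE => nv ->; constructor 3; exists v.
Qed.

Lemma lift_base_edge a b : lift_base [set a; b] = [set inl a; inl b].
Proof. by apply/setP => -[x|z]; rewrite !inE // !(inj_eq inl_inj). Qed.

Lemma lift_copy_edge v x y : lift_copy v [set x; y] = [set inr (v, x); inr (v, y)].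
Proof.
apply/setP => -[a|[w i]]; rewrite !inE // !(inj_eq inr_inj) !xpair_eqE.
by case: (w == v).
Qed.

Lemma spoke_edge v : spoke v = [set inl v; inr (v, spoke_index)].
Proof.
by apply/setP => -[x|[w i]]; rewrite !inE //= ?(inj_eq inl_inj) ?(inj_eq inr_inj)
  ?xpair_eqE ?orbF.
Qed.

Lemma corona_matching_matching : is_matching R corona_matching.
Proof.
apply: matching_intro => [A|A1 A2 z].
  case/mem_corona_matching => [[B BH ->]|[v [j ->]]|[v _ ->]].
  - have [a [b [eab ->]]] := matching_edge mH BH.
    by exists (inl a), (inl b); rewrite lift_base_edge.
  - have [x [y [cxy ->]]] := cycle_pair_edge (cycle_pair_bound j).
    by exists (inr (v, x)), (inr (v, y)); rewrite lift_copy_edge /= eqxx.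
  - by exists (inl v), (inr (v, spoke_index)); rewrite spoke_edge /= eqxx.
case/mem_corona_matching => [[B1 H1 ->]|[v1 [j1 ->]]|[v1 n1 ->]];
case/mem_corona_matching => [[B2 H2 ->]|[v2 [j2 ->]]|[v2 n2 ->]];
case: z => [a|[w i]]; rewrite !inE //=.
- by move=> aB1 aB2; rewrite (matching_eq mH H1 H2 aB1 aB2).
- by rewrite orbF => aB1 /eqP ea; case/negP: n2; apply/bigcupP; exists B1; rewrite -?ea.
- case/andP=> /eqP -> i1 /andP [/eqP -> i2].
  by rewrite (_ : j1 = j2) //; apply: val_inj => /=; lia.
- case/andP=> _ i1 /andP [_ /eqP i2]; move: i1; rewrite i2 spoke_index_val.
  by have := ltn_ord j1; case: ifP; lia.
- by rewrite orbF => /eqP ea aB2; case/negP: n1; apply/bigcupP; exists B2; rewrite -?ea.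
- case/andP=> _ /eqP i1 /andP [_ i2]; move: i2; rewrite i1 spoke_index_val.
  by have := ltn_ord j2; case: ifP; lia.
- by rewrite !orbF => /eqP -> /eqP ->.
- by case/andP=> /eqP -> _ /andP [/eqP -> _].
Qed.

Lemma corona_matching_saturates z :
  (if z is inr (v, i) then cycle_cover i else true) -> saturated corona_matching z.
Proof.
case: z => [a _|[v i]].
  apply/existsP; case: (boolP (a \in cover H)) => [/bigcupP [B BH aB]|na].
    by exists (lift_base B); rewrite !inE aB andbT; apply/orP; left; apply/orP; left;
      apply: imset_f.
  by exists (spoke a); rewrite !inE eqxx andbT; apply/orP; right; apply: imset_f; rewrite inE.
case/orP=> [/andP [ltq ne2] | /andP [m3 /eqP iq]]; apply/existsP.
  have [j ij] := cycle_cover_pair ltq ne2.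
  exists (lift_copy v (cycle_pair p (3 * j))); apply/andP; split.
    by rewrite !inE; apply/orP; left; apply/orP; right; apply/imsetP; exists (v, j).
  by rewrite inE /= eqxx ij.
exists (spoke v); apply/andP; split.
  rewrite !inE; apply/orP; right; apply: imset_f.
  by rewrite inE H_empty // /cover big_set0 inE.
by rewrite !inE /= eqxx -(inj_eq val_inj) /= spoke_index_val (negbTE m3) iq.
Qed.

Lemma corona_matching_maximal : is_maximal_matching R corona_matching.
Proof.
apply/maximal_matchingP; split; first exact: corona_matching_matching.
have satl a : saturated corona_matching (inl a) by exact: corona_matching_saturates.
move=> [a|[v i]] [b|[w j]] /=; rewrite ?satl ?orbT //.
case/andP=> /eqP <- /(cycle_cover_edge p2).
by case/orP=> /(@corona_matching_saturates (inr (v, _))) ->; rewrite ?orbT.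
Qed.

Lemma card_corona_matching_le :
  #|corona_matching| <= #|H| + #|T| * q + (#|T| - 2 * #|H|).
Proof.
apply: leq_trans (leq_card_setU _ _).1 _; apply: leq_add.
  apply: leq_trans (leq_card_setU _ _).1 _; apply: leq_add; first exact: leq_imset_card.
  by apply: leq_trans (leq_imset_card _ _) _; rewrite card_prod card_ord.
apply: leq_trans (leq_imset_card _ _) _.
by have := cardsC (cover H); rewrite (card_cover_matching mH e_irr); lia.
Qed.

End UpperBound.
End Corona.

Lemma corona_saturation_number (T : finType) (e : rel T) (p : nat) :
  2 <= p -> irreflexive e ->
  saturation_number (corona_rel e p.+1) =
  #|T| * (p.+3 %/ 3) + (if p.+1 %% 3 == 0 then #|T| - matching_number e else 0).
Proof.
move=> p2 e_irr; have [Mmax mMmax cardMmax] := maximum_matching_exists e.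
pose H := if p.+1 %% 3 == 0 then Mmax else set0.
have mH : is_matching e H by rewrite /H; case: ifP => // _; exact: matching0.
have H_empty : p.+1 %% 3 != 0 -> H = set0 by rewrite /H => /negbTE ->.
apply: saturation_number_eq (corona_matching_maximal p2 mH H_empty) _
  (@corona_matching_lb _ _ _).
apply: leq_trans (card_corona_matching_le p2 e_irr mH H_empty) _.
have -> : p.+3 %/ 3 = (p.+1 %/ 3) + (p.+1 %% 3 != 0) by case: eqP; lia.
rewrite /H; case: eqP => _ /=; last by rewrite cards0 mulnDr muln1; lia.
rewrite cardMmax mulnDr muln0 addn0.
by have := matching_number_le e_irr; set n := #|T|; clearbody n; move: (n * _) => c; lia.
Qed.

Theorem theorem2p5 (T : finType) (e : rel T)
  (e_sym : symmetric e) (e_irr : irreflexive e) (m : nat) (hm : 3 <= m) :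
  saturation_number (corona_rel e m) =
  if m %% 3 == 0 then
    #|T| * saturation_number (cycle_rel m) + matching_number e
      + (#|T| - 2 * matching_number e)
  else #|T| * saturation_number (cycle_rel m).
Proof.
case: m hm => [|p] // p2.
rewrite corona_saturation_number // cycle_saturation_number //.
have := matching_number_le e_irr; move: (#|T| * _) => c.
by case: ifP => _; lia.
Qed.
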